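(* Let $a^+$ denote multiplication by $x$ and $a=\frac{d}{dx}$ (so $[a,a^+]=1$), and let $W_{1,\infty}$ be the algebra of operators generated by $a^+$, $(a^+)^{-1}$ and $a$, graded by $\mathrm{weight}(a^+)=1$, $\mathrm{weight}((a^+)^{-1})=\mathrm{weight}(a)=-1$. Let $e\ge 0$ be an integer and let $$\Omega=\sum_{w}\alpha_w\, w$$ be a finite linear combination of words $w$ in the letters $a^+,(a^+)^{-1},a$, each containing exactly one occurrence of $a$ and each of weight $e$. Define the coefficients $S_\Omega(n,k)$ by the normal ordering $$\mathcal{N}(\Omega^n)=(a^+)^{ne}\sum_{k\ge 0}S_\Omega(n,k)\,(a^+)^k a^k\qquad(n\ge 0),$$ and let $U_\lambda=e^{\lambda\Omega}=\sum_{n\ge0}\frac{\lambda^n}{n!}\Omega^n$. Then for formal power series $g(x),\phi(x)$, the following are equivalent: (i) $\displaystyle\sum_{n,k\ge 0}S_\Omega(n,k)\frac{x^n}{n!}y^k=g(x)e^{y\phi(x)}$; (ii) for all $f$, $\;U_\lambda[f](x)=g(\lambda x^e)\,f\big(x(1+\phi(\lambda x^e))\big)$.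
   Context: $\mathcal{N}(\cdot)$ denotes the normally ordered form of an operator, i.e. its expression as a linear combination of terms with all powers of $a^+$ (and $(a^+)^{-1}$) to the left of all powers of $a$, obtained using $aa^+=a^+a+1$. Both sides of (ii) are understood as formal power series in $\lambda$, with $f\big(x(1+\phi(\lambda x^e))\big)$ understood via its Taylor expansion $\sum_k \frac{f^{(k)}(x)}{k!}\big(x\phi(\lambda x^e)\big)^k$. *)

From mathcomp Require Import all_boot all_order all_algebra.
Set Implicit Arguments. Unset Strict Implicit. Unset Printing Implicit Defensive.
Import Order.TTheory GRing.Theory Num.Theory.
Local Open Scope ring_scope.

(* Letters of words in W_{1,oo}: a^+ (mult. by x), (a^+)^{-1}, a (= d/dx). *)
Inductive letter := Ap | Apinv | Aa.

Definition is_a (l : letter) : bool := if l is Aa then true else false.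

Definition letter_weight (l : letter) : int :=
  match l with Ap => 1 | Apinv => -1 | Aa => -1 end.
Definition weight (w : seq letter) : int := \sum_(l <- w) letter_weight l.

Section Defs.
Variable K : fieldType.

(* A finite linear combination  Omega = sum alpha_w w  is a list of pairs
   (alpha_w, w); the word [:: l1; ...; lr] is the operator product l1 ... lr. *)
Definition lincomb := seq (K * seq letter).

(* A normally ordered expression: formal sum of terms c (a^+)^m a^k, m : int. *)
Definition nform := seq (K * int * nat).

(* Left multiplication of a normally ordered term by one letter, using
   a^+ a^+^m = a^+^(m+1), (a^+)^{-1} a^+^m = a^+^(m-1) and the consequence
   a (a^+)^m = (a^+)^m a + m (a^+)^(m-1) of a a^+ = a^+ a + 1 (m : int). *)
Definition lmul_letter (l : letter) (t : nform) : nform :=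
  flatten [seq let c := tm.1.1 in let m := tm.1.2 in let k := tm.2 in
               match l with
               | Ap => [:: (c, m + 1, k)]
               | Apinv => [:: (c, m - 1, k)]
               | Aa => [:: (c, m, k.+1); (c * m%:~R, m - 1, k)]
               end | tm <- t].

Definition lmul_word (w : seq letter) (t : nform) : nform :=
  foldr lmul_letter t w.

Definition lmul_lincomb (Om : lincomb) (t : nform) : nform :=
  flatten [seq [seq (aw.1 * tm.1.1, tm.1.2, tm.2) | tm <- lmul_word aw.2 t]
          | aw <- Om].

Definition nf_pow (Om : lincomb) (n : nat) : nform :=
  iter n (lmul_lincomb Om) [:: (1, 0%:Z, 0%N)].

Definition nf_coef (t : nform) (m : int) (k : nat) : K :=
  \sum_(tm <- t | (tm.1.2 == m) && (tm.2 == k)) tm.1.1.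

(* S_Omega(n,k): N(Omega^n) = (a^+)^(ne) sum_k S_Omega(n,k) (a^+)^k a^k *)
Definition S_Omega (e : nat) (Om : lincomb) (n k : nat) : K :=
  nf_coef (nf_pow Om n) (n * e + k)%N%:Z k.

(* Formal series sum_{m in Z} s m x^m (coefficient functions int -> K). *)
Definition lseries := int -> K.

Definition act_letter (l : letter) (s : lseries) : lseries :=
  match l with
  | Ap => fun m => s (m - 1)
  | Apinv => fun m => s (m + 1)
  | Aa => fun m => (m + 1)%:~R * s (m + 1)
  end.

Definition act_word (w : seq letter) (s : lseries) : lseries :=
  foldr act_letter s w.

Definition act_lincomb (Om : lincomb) (s : lseries) : lseries :=
  fun m => \sum_(aw <- Om) aw.1 * act_word aw.2 s m.

Definition fps := nat -> K.

Definition embed (f : fps) : lseries :=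
  fun m => match m with Posz n => f n | Negz _ => 0 end.

(* coefficient of lambda^n x^m in U_lambda[f](x) = sum_n lambda^n/n! Omega^n f *)
Definition U_coef (Om : lincomb) (f : fps) (n : nat) (m : int) : K :=
  (n`!%:R)^-1 * iter n (act_lincomb Om) (embed f) m.

Definition fps1 : fps := fun n => (n == 0%N)%:R.
Definition fps_mul (p q : fps) : fps :=
  fun n => \sum_(i < n.+1) p i * q (n - i)%N.
Definition fps_pow (p : fps) (k : nat) : fps := iter k (fps_mul p) fps1.
Definition fps_deriv (p : fps) : fps := fun n => n.+1%:R * p n.+1.

(* bivariate formal power series: B n m = coefficient of u^n v^m *)
Definition bfps := nat -> nat -> K.
Definition b1 : bfps := fun n m => ((n == 0%N) && (m == 0%N))%:R.
Definition bmul (A B : bfps) : bfps :=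
  fun n m => \sum_(i < n.+1) \sum_(j < m.+1) A i j * B (n - i)%N (m - j)%N.
Definition bpow (A : bfps) (k : nat) : bfps := iter k (bmul A) b1.
Definition in_fst (p : fps) : bfps := fun n m => if m == 0%N then p n else 0.
Definition in_snd (p : fps) : bfps := fun n m => if n == 0%N then p m else 0.

Definition bexp_snd (phi : fps) : bfps :=
  fun n k => (k`!%:R)^-1 * fps_pow phi k n.

(* In (ii): variables (lambda, x).  h(lambda x^e): *)
Definition subst_lxe (e : nat) (h : fps) : bfps :=
  fun n m => if m == (e * n)%N then h n else 0.
Definition bX : bfps := in_snd (fun m => (m == 1%N)%:R).

(* f(x(1 + psi)) := sum_k f^(k)(x)/k! (x psi)^k ; the k-th term is divisible
   by x^k, so the coefficient of lambda^n x^m only involves k <= m. *)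
Definition taylor_comp (f : fps) (psi : bfps) : bfps :=
  fun n m => \sum_(k < m.+1)
     bmul (in_snd (fun j => (k`!%:R)^-1 * iter k fps_deriv f j))
          (bpow (bmul bX psi) k) n m.

(* coefficient of lambda^n x^m in g(lambda x^e) f(x(1+phi(lambda x^e))) *)
Definition rhs_ii (e : nat) (g phi f : fps) : bfps :=
  bmul (subst_lxe e g) (taylor_comp f (subst_lxe e phi)).

End Defs.

From mathcomp Require Import all_boot all_order all_algebra.
From mathcomp Require Import zify ring.
From Stdlib Require Import FunctionalExtensionality.
Import GRing.Theory.
Set Implicit Arguments. Unset Strict Implicit. Unset Printing Implicit Defensive.
Local Open Scope ring_scope.

(* Both sides of (ii) are operators of the form
   sum_(n,k) c(n,k) lambda^n x^(ne+k) (d/dx)^k.  For U_lambda this is normal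
   ordering: every word of Omega^n has weight ne, so every term of N(Omega^n) is
   a multiple of (a^+)^(ne+k) a^k, and c(n,k) = S_Omega(n,k)/n!.  For the right
   side it is Taylor's formula, with c(n,k) the coefficient of x^n y^k in
   g(x) e^(y phi(x)).  Such an operator maps x^J to
   x^(ne+J) sum_k c(n,k) J(J-1)...(J-k+1), and since the falling factorials
   form a triangular system with diagonal k! <> 0 in characteristic 0, the
   operator determines its coefficients c(n,k). *)

Section NormalOrdering.
Variable K : fieldType.
Implicit Types (t : nform K) (s : lseries K) (Om : lincomb K).

Definition eval_nform t s : lseries K :=
  fun p => \sum_(tm <- t) tm.1.1 * iter tm.2 (act_letter Aa) s (p - tm.1.2).

Lemma eval_nform_letter l t s :
  eval_nform (lmul_letter l t) s = act_letter l (eval_nform t s).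
Proof.
apply: functional_extensionality => p.
rewrite /eval_nform /lmul_letter big_flatten big_map.
case: l => /=; rewrite ?mulr_sumr; apply: eq_bigr => -[[c m] k] _ /=.
- by rewrite big_seq1 /= opprD addrA addrAC.
- by rewrite big_seq1 /= opprD opprK addrA addrAC.
rewrite big_cons big_seq1 /= opprB addrA [p - m + 1]addrAC.
by rewrite !intrD !intrN; ring.
Qed.

Lemma eval_nform_word w t s :
  eval_nform (lmul_word w t) s = act_word w (eval_nform t s).
Proof. by elim: w => //= l w IHw; rewrite eval_nform_letter IHw. Qed.

Lemma eval_nform_lincomb Om t s :
  eval_nform (lmul_lincomb Om t) s = act_lincomb Om (eval_nform t s).
Proof.
apply: functional_extensionality => p.
rewrite /eval_nform /lmul_lincomb /act_lincomb big_flatten big_map.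
apply: eq_bigr => aw _; rewrite big_map -eval_nform_word mulr_sumr.
by apply: eq_bigr => tm _; rewrite mulrA.
Qed.

Lemma eval_nform_pow Om n s : eval_nform (nf_pow Om n) s = iter n (act_lincomb Om) s.
Proof.
elim: n => [|n IHn] /=.
  by apply: functional_extensionality => p; rewrite /eval_nform big_seq1 mul1r subr0.
by rewrite -IHn -eval_nform_lincomb.
Qed.

Definition nform_homog (W : int) t := all (fun tm => tm.1.2 == W + tm.2%:Z) t.

Lemma lmul_letter_homog W l t :
  nform_homog W t -> nform_homog (W + letter_weight l) (lmul_letter l t).
Proof.
move=> Ht; apply/allP => u /flattenP[r /mapP[[[c m] k] Htm ->]].
have /eqP /= Hm : m == W + k%:Z := allP Ht _ Htm.
case: l; rewrite /= ?inE; [move/eqP->|move/eqP->|case/orP=> /eqP->];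
  by apply/eqP => /=; lia.
Qed.

Lemma lmul_word_homog W w t :
  nform_homog W t -> nform_homog (W + weight w) (lmul_word w t).
Proof.
elim: w => [|l w IHw] Ht /=; first by rewrite /weight big_nil addr0.
rewrite /weight big_cons addrA addrAC; exact: lmul_letter_homog (IHw Ht).
Qed.

Lemma lmul_lincomb_homog W (e : int) Om t :
  all (fun aw => weight aw.2 == e) Om ->
  nform_homog W t -> nform_homog (W + e) (lmul_lincomb Om t).
Proof.
move=> HOm Ht; elim: Om HOm => //= aw Om IHOm /andP[/eqP He /IHOm].
rewrite /nform_homog /lmul_lincomb /= all_cat -/(lmul_lincomb Om t) => ->.
by rewrite andbT all_map -He; exact: lmul_word_homog.
Qed.

Lemma nf_pow_homog (e : int) Om n :
  all (fun aw => weight aw.2 == e) Om -> nform_homog (e *+ n) (nf_pow Om n).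
Proof.
move=> HOm; elim: n => [//|n IHn] /=.
by rewrite mulrS addrC; exact: lmul_lincomb_homog.
Qed.

End NormalOrdering.

Section FallingFactorials.
Variable K : fieldType.
Implicit Types (c d : nat -> K) (f : fps K).

Definition ffact_transform c (J : nat) : K := \sum_(k < J.+1) c k * (J ^_ k)%:R.

Lemma ffact_transform_widen c J N : (J < N)%N ->
  \sum_(k < N) c k * (J ^_ k)%:R = ffact_transform c J.
Proof.
move=> ltJN; rewrite /ffact_transform.
rewrite (big_ord_widen N (fun k => c k * (J ^_ k)%:R) ltJN) [RHS]big_mkcond.
by apply: eq_bigr => k _; case: ltnP => // Jk; rewrite ffact_small // mulr0.
Qed.

Lemma ffact_transform_sum N (a : 'I_N -> K) (c : 'I_N -> nat -> K) J :
  \sum_(i < N) a i * ffact_transform (c i) J =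
  ffact_transform (fun k => \sum_(i < N) a i * c i k) J.
Proof.
under eq_bigr do rewrite /ffact_transform mulr_sumr.
rewrite exchange_big.
by apply: eq_bigr => k _; rewrite mulr_suml; apply: eq_bigr => i _; rewrite mulrA.
Qed.

Lemma ffact_transform_inj c d : [pchar K] =i pred0 ->
  (forall J, ffact_transform c J = ffact_transform d J) -> c =1 d.
Proof.
move=> K0 Hcd; elim/ltn_ind => k IHk.
move: (Hcd k); rewrite /ffact_transform !big_ord_recr /= ffactnn.
rewrite (eq_bigr (fun j : 'I_k => d j * (k ^_ j)%:R)) => [/addrI|j _]; last first.
  by rewrite IHk.
by apply: mulIf; rewrite ((pcharf0P K).1 K0) -lt0n fact_gt0.
Qed.

Lemma iter_fps_deriv_sub f J k : (k <= J)%N ->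
  iter k (@fps_deriv K) f (J - k)%N = (J ^_ k)%:R * f J.
Proof.
elim: k => [|k IHk] lekJ; first by rewrite subn0 mul1r.
rewrite /= {1}/fps_deriv subnSK // IHk ?(ltnW lekJ) // ffactnSr natrM.
by rewrite mulrA [_ * (J ^_ k)%:R]mulrC.
Qed.

Lemma embed_neg f q : q < 0 -> embed f q = 0.
Proof. by case: q. Qed.

Lemma act_Aa_embed f : act_letter Aa (embed f) = embed (fps_deriv f).
Proof.
apply: functional_extensionality => -[m|[|m]] /=; last by rewrite mulr0.
  by rewrite addrC -intS -pmulrn addn1.
by rewrite (_ : (-1)%Z + 1 = 0) // mul0r.
Qed.

Lemma iter_act_Aa_embed f k :
  iter k (act_letter Aa) (embed f) = embed (iter k (@fps_deriv K) f).
Proof. by elim: k => // k IHk; rewrite !iterS IHk act_Aa_embed. Qed.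

Lemma embed_iter_deriv_sub f (J k : nat) :
  embed (iter k (@fps_deriv K) f) (J%:Z - k%:Z) = (J ^_ k)%:R * f J.
Proof.
case: (leqP k J) => [lekJ|ltJk]; first by rewrite subzn //= iter_fps_deriv_sub.
by rewrite embed_neg ?ffact_small ?mul0r //; lia.
Qed.

(* The coefficient of lambda^n x^m in sum_(n,k) c n k lambda^n x^(ne+k) f^(k)(x):
   x^k f^(k)(x) has coefficient J^_k f_J at x^J. *)
Definition diffop_coef (e : nat) (c : bfps K) f : bfps K := fun n m =>
  if (n * e <= m)%N then f (m - n * e)%N * ffact_transform (c n) (m - n * e) else 0.

Lemma diffop_coef_inj e (c d : bfps K) : [pchar K] =i pred0 ->
  (forall f n m, diffop_coef e c f n m = diffop_coef e d f n m) ->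
  forall n k, c n k = d n k.
Proof.
move=> K0 Hcd n; apply: ffact_transform_inj K0 _ => J.
by move: (Hcd (fun _ => 1) n (n * e + J)%N); rewrite /diffop_coef leq_addr addKn !mul1r.
Qed.

End FallingFactorials.

Section LeftSide.
Variable K : fieldType.
Implicit Types (t : nform K) (f : fps K).

Lemma sum_nform_by_degree W t (F : nat -> K) N :
  nform_homog W t -> (forall k, (N <= k)%N -> F k = 0) ->
  \sum_(tm <- t) tm.1.1 * F tm.2 = \sum_(k < N) nf_coef t (W + k%:Z) k * F k.
Proof.
move=> Ht FN.
transitivity (\sum_(tm <- t) \sum_(k < N) if k == tm.2 :> nat then tm.1.1 * F k else 0).
  apply: eq_bigr => tm _; rewrite -big_mkcond (big_ord1_eq _ (fun k => tm.1.1 * F k)).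
  by case: ltnP => // /FN ->; rewrite mulr0.
rewrite exchange_big; apply: eq_bigr => k _.
rewrite /nf_coef mulr_suml [RHS]big_mkcond /= [LHS]big_seq [RHS]big_seq.
apply: eq_bigr => tm /(allP Ht) /eqP ->.
by rewrite (inj_eq (addrI W)) eqz_nat andbb eq_sym.
Qed.

Lemma eval_nform_embed W t f (J : nat) : nform_homog W t ->
  eval_nform t (embed f) (W + J%:Z) =
  f J * ffact_transform (fun k => nf_coef t (W + k%:Z) k) J.
Proof.
move=> Ht; transitivity (\sum_(tm <- t) tm.1.1 * ((J ^_ tm.2)%:R * f J)).
  rewrite /eval_nform big_seq [RHS]big_seq; apply: eq_bigr => tm /(allP Ht) /eqP ->.
  by rewrite iter_act_Aa_embed opprD addrACA subrr add0r embed_iter_deriv_sub.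
rewrite (sum_nform_by_degree (F := fun k => (J ^_ k)%:R * f J) (N := J.+1) Ht).
  by rewrite /ffact_transform mulr_sumr; apply: eq_bigr => k _; rewrite mulrA mulrC.
by move=> k ltJk; rewrite ffact_small ?mul0r.
Qed.

Lemma eval_nform_embed_lt W t f m :
  nform_homog W t -> m < W -> eval_nform t (embed f) m = 0.
Proof.
move=> Ht ltmW; rewrite /eval_nform big_seq big1 // => tm /(allP Ht) /eqP ->.
by rewrite iter_act_Aa_embed embed_neg ?mulr0 //; lia.
Qed.

Lemma U_coefE (e : nat) (Om : lincomb K) :
  all (fun aw => weight aw.2 == e%:Z) Om -> forall f n m,
  U_coef Om f n m =
  if m is Posz mm then diffop_coef e (fun n k => S_Omega e Om n k / n`!%:R) f n mm
  else 0.
Proof.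
move=> HOm f n m; have Ht : nform_homog (n * e)%N%:Z (nf_pow Om n).
  have -> : (n * e)%N%:Z = e%:Z *+ n by rewrite -mulr_natr natz -PoszM mulnC.
  exact: nf_pow_homog.
rewrite /U_coef -eval_nform_pow /diffop_coef.
case: m => [mm|mm]; last by rewrite (eval_nform_embed_lt _ Ht) ?mulr0.
case: leqP => [lenm|ltmn]; last by rewrite (eval_nform_embed_lt _ Ht) ?mulr0 ?ltz_nat.
rewrite -{1}(subnKC lenm) PoszD eval_nform_embed // mulrCA /ffact_transform mulr_sumr.
congr (_ * _); apply: eq_bigr => k _.
by rewrite /S_Omega PoszD mulrA [_^-1 * _]mulrC.
Qed.

End LeftSide.

Section RightSide.
Variable K : fieldType.
Implicit Types (f g h phi q : fps K) (B : bfps K).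

Lemma bfps_ext (A B : bfps K) : (forall n m, A n m = B n m) -> A = B.
Proof.
move=> AB; apply: functional_extensionality => n.
by apply: functional_extensionality => m; exact: AB.
Qed.

Definition xpow_subst_lxe (e s : nat) h : bfps K :=
  fun n m => if m == (e * n + s)%N then h n else 0.

Lemma subst_lxeE e h : subst_lxe e h = xpow_subst_lxe e 0 h.
Proof. by apply: bfps_ext => n m; rewrite /xpow_subst_lxe addn0. Qed.

Lemma bX_xpow_subst_lxe e : bX K = xpow_subst_lxe e 1 (fps1 K).
Proof.
apply: bfps_ext => -[|n] m.
  by rewrite /bX /in_snd /xpow_subst_lxe /fps1 /= muln0; case: (m == 1)%N.
by rewrite /bX /in_snd /xpow_subst_lxe /fps1 /=; case: ifP.
Qed.

Lemma fps_mul1 h : fps_mul (fps1 K) h = h.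
Proof.
apply: functional_extensionality => n.
rewrite /fps_mul big_ord_recl /fps1 /= mul1r subn0 big1 ?addr0 // => i _.
by rewrite mul0r.
Qed.

Lemma bmul_xpow_subst_lxe_l e s h B n m :
  bmul (xpow_subst_lxe e s h) B n m =
  \sum_(i < n.+1)
    if (e * i + s <= m)%N then h i * B (n - i)%N (m - (e * i + s))%N else 0.
Proof.
apply: eq_bigr => i _.
rewrite (eq_bigr (fun j : 'I_m.+1 =>
    if (j : nat) == (e * i + s)%N then h i * B (n - i)%N (m - j)%N else 0)).
  by rewrite -big_mkcond (big_ord1_eq _ (fun j => h i * B (n - i)%N (m - j)%N)) ltnS.
by move=> j _; rewrite /xpow_subst_lxe; case: eqP; rewrite ?mul0r.
Qed.

Lemma bmul_xpow_subst_lxe e s1 s2 h1 h2 :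
  bmul (xpow_subst_lxe e s1 h1) (xpow_subst_lxe e s2 h2) =
  xpow_subst_lxe e (s1 + s2) (fps_mul h1 h2).
Proof.
apply: bfps_ext => n m; rewrite bmul_xpow_subst_lxe_l [RHS]/xpow_subst_lxe.
case: eqP => [Hm|Hm]; [apply: eq_bigr | apply: big1] => i _;
  rewrite /xpow_subst_lxe mulnBr;
  have : (e * i <= e * n)%N by rewrite leq_mul2l -ltnS ltn_ord orbT.
- move: (e * i)%N (e * n)%N Hm => ei en -> lei.
  rewrite ifT; last by lia.
  by rewrite (_ : (en + (s1 + s2) - (ei + s1) = en - ei + s2)%N) ?eqxx //; lia.
- move: (e * i)%N (e * n)%N Hm => ei en Hm lei.
  by case: leqP => // le; case: eqP => [?|_]; [lia | rewrite mulr0].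
Qed.

Lemma bpow_xpow_subst_lxe e phi k :
  bpow (xpow_subst_lxe e 1 phi) k = xpow_subst_lxe e k (fps_pow phi k).
Proof.
elim: k => [|k IHk].
  apply: bfps_ext => -[|n] m.
    by rewrite /bpow /b1 /xpow_subst_lxe /fps_pow /fps1 /= muln0; case: (m == 0)%N.
  by rewrite /bpow /b1 /xpow_subst_lxe /fps_pow /fps1 /=; case: ifP.
by rewrite /bpow iterS -/(bpow _ k) IHk bmul_xpow_subst_lxe add1n.
Qed.

Lemma bmul_in_snd_xpow_subst_lxe e s q h n m :
  bmul (in_snd q) (xpow_subst_lxe e s h) n m =
  if (e * n + s <= m)%N then q (m - (e * n + s))%N * h n else 0.
Proof.
rewrite /bmul big_ord_recl [X in _ + X]big1 ?addr0 => [|i _]; last first.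
  by apply: big1 => j _; rewrite /in_snd /= mul0r.
pose a := (e * n + s)%N.
rewrite (eq_bigr (fun j : 'I_m.+1 =>
    if (a <= m)%N && (j == (m - a)%N :> nat) then q j * h n else 0)).
  rewrite -big_mkcond (big_ord1_cond_eq _ (fun j => q j * h n) (fun=> (a <= m)%N)).
  by rewrite ltnS leq_subr.
move=> j _; rewrite /in_snd /xpow_subst_lxe /= subn0.
have -> : (m - j == a)%N = (a <= m)%N && (j == (m - a)%N :> nat).
  by have := ltn_ord j; lia.
by case: ifP; rewrite ?mulr0.
Qed.

Lemma taylor_comp_subst_lxe e phi f :
  taylor_comp f (subst_lxe e phi) =
  diffop_coef e (fun n k => (k`!%:R)^-1 * fps_pow phi k n) f.
Proof.
apply: bfps_ext => n m.
rewrite /taylor_comp subst_lxeE (bX_xpow_subst_lxe e) bmul_xpow_subst_lxe fps_mul1.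
under eq_bigr do rewrite bpow_xpow_subst_lxe bmul_in_snd_xpow_subst_lxe.
rewrite /diffop_coef mulnC; case: leqP => [le_m|lt_m]; last first.
  by rewrite big1 // => k _; case: leqP => //; lia.
rewrite -(ffact_transform_widen _ (N := m.+1)) ?ltnS ?leq_subr // mulr_sumr.
apply: eq_bigr => k _; case: leqP => [lek|ltk].
  by rewrite subnDA iter_fps_deriv_sub; [ring | lia].
by rewrite ffact_small ?mul0r ?mulr0 //; lia.
Qed.

Lemma bmul_subst_lxe_diffop e g (c : bfps K) f :
  bmul (subst_lxe e g) (diffop_coef e c f) =
  diffop_coef e (fun n k => \sum_(i < n.+1) g i * c (n - i)%N k) f.
Proof.
apply: bfps_ext => n m.
rewrite subst_lxeE bmul_xpow_subst_lxe_l {2}/diffop_coef.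
case: leqP => [le_m|lt_m]; last first.
  apply: big1 => i _; rewrite /diffop_coef mulnBl addn0 [(e * i)%N]mulnC.
  have : (i * e <= n * e)%N by rewrite leq_mul2r -ltnS ltn_ord orbT.
  move: (i * e)%N (n * e)%N lt_m => ie ne lt_m lei.
  by case: leqP => // le; case: leqP => [?|_]; [lia | rewrite mulr0].
rewrite -ffact_transform_sum mulr_sumr; apply: eq_bigr => i _.
rewrite /diffop_coef mulnBl addn0 [(e * i)%N]mulnC.
have : (i * e <= n * e)%N by rewrite leq_mul2r -ltnS ltn_ord orbT.
move: (i * e)%N (n * e)%N le_m => ie ne le_m lei.
rewrite !ifT; try lia.
by rewrite (_ : (m - ie - (ne - ie) = m - ne)%N) 1?mulrCA //; lia.
Qed.

Lemma bmul_in_fst_bexp_snd g phi n k :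
  bmul (in_fst g) (bexp_snd phi) n k =
  \sum_(i < n.+1) g i * ((k`!%:R)^-1 * fps_pow phi k (n - i)%N).
Proof.
apply: eq_bigr => i _; rewrite big_ord_recl big1 ?addr0 /in_fst /bexp_snd /= ?subn0 //.
by move=> j _; rewrite mul0r.
Qed.

Lemma rhs_iiE e g phi f :
  rhs_ii e g phi f = diffop_coef e (bmul (in_fst g) (bexp_snd phi)) f.
Proof.
rewrite /rhs_ii taylor_comp_subst_lxe bmul_subst_lxe_diffop.
by congr (diffop_coef _ _ _); apply: bfps_ext => n k; rewrite bmul_in_fst_bexp_snd.
Qed.

End RightSide.

Theorem mainTheorem2 (K : fieldType) (HK : [pchar K] =i pred0)
  (e : nat) (Om : lincomb K)
  (HOm : all (fun aw => (count is_a aw.2 == 1%N) && (weight aw.2 == e%:Z)) Om)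
  (g phi : fps K) :
  (* (i) sum_{n,k} S_Omega(n,k) x^n/n! y^k = g(x) e^{y phi(x)} *)
  (forall n k : nat,
      S_Omega e Om n k / n`!%:R = bmul (in_fst g) (bexp_snd phi) n k)
  <->
  (* (ii) for all f, U_lambda[f](x) = g(lambda x^e) f(x(1+phi(lambda x^e))) *)
  (forall (f : fps K) (n : nat) (m : int),
      U_coef Om f n m =
      match m with Posz mm => rhs_ii e g phi f n mm | Negz _ => 0 end).
Proof.
have HOm_e : all (fun aw => weight aw.2 == e%:Z) Om by apply: sub_all HOm => aw /andP[].
split=> [Scoef f n [mm|mm] | Ucoef]; rewrite ?(U_coefE HOm_e) //.
  by rewrite rhs_iiE; congr (diffop_coef _ _ _ _ _); exact: bfps_ext.
apply: (diffop_coef_inj (e := e) HK) => f n m.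
by move: (Ucoef f n m); rewrite (U_coefE HOm_e) rhs_iiE.
Qed.
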